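(* Let $\xi>0$ be such that $D_\xi=D^TD-\xi^2I$ is nonsingular. Then for every $\omega\ge0$, the matrix $G(j\omega)$ has a singular value equal to $\xi$ if and only if $\lambda=j\omega$ solves $\det H_\xi(\lambda)=0$, where $H_\xi(\lambda)=\lambda I-M_0-\sum_{i=1}^m\left(M_ie^{-\lambda\tau_i}+M_{-i}e^{\lambda\tau_i}\right)$.
   Context: Let $n,m,n_u,n_y$ be positive integers, $A_0,\dots,A_m\in\mathbb{R}^{n\times n}$, $B\in\mathbb{R}^{n\times n_u}$, $C\in\mathbb{R}^{n_y\times n}$, $D\in\mathbb{R}^{n_y\times n_u}$, delays $\tau_1,\dots,\tau_m\ge0$. The transfer function is $G(s)=C\left(sI-A_0-\sum_{i=1}^mA_ie^{-\tau_is}\right)^{-1}B+D$. Standing assumption: the system is stable, i.e. all solutions $s$ of $\det\left(sI-A_0-\sum_{i=1}^mA_ie^{-\tau_is}\right)=0$ have negative real part. For $\xi>0$ put $D_\xi=D^TD-\xi^2I_{n_u}$, $\tilde D_\xi=DD^T-\xi^2I_{n_y}$, and define $2n\times2n$ matrices $M_0=\begin{bmatrix} A_0-BD_\xi^{-1}D^TC & -BD_\xi^{-1}B^T\\ \xi^2 C^T\tilde D_\xi^{-1}C & -A_0^T+C^TDD_\xi^{-1}B^T\end{bmatrix}$, $M_i=\begin{bmatrix}A_i&0\\0&0\end{bmatrix}$, $M_{-i}=\begin{bmatrix}0&0\\0&-A_i^T\end{bmatrix}$, $1\le i\le m$. *)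

From HB Require Import structures.
From mathcomp Require Import all_boot all_order all_algebra.
From mathcomp Require Import complex.
From mathcomp Require Import reals sequences exp trigo.
Set Implicit Arguments. Unset Strict Implicit. Unset Printing Implicit Defensive.
Import Order.TTheory GRing.Theory Num.Theory.
Local Open Scope ring_scope.
Local Open Scope complex_scope.

Section TDSDefs.
Variable R : realType.
Local Notation Cx := R[i].

Definition cexp (z : Cx) : Cx :=
  (expR (complex.Re z))%:C * ((cos (complex.Im z)) +i* (sin (complex.Im z))).

Definition toCmx {p q : nat} (X : 'M[R]_(p, q)) : 'M[Cx]_(p, q) :=
  map_mx (real_complex R) X.

Definition conjT {p q : nat} (X : 'M[Cx]_(p, q)) : 'M[Cx]_(q, p) :=
  (map_mx (@conjc R) X)^T.

Definition is_singular_value {p q : nat} (X : 'M[Cx]_(p, q)) (s : R) : Prop :=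
  0 <= s /\ eigenvalue (conjT X *m X) ((s ^+ 2)%:C).

Definition char_mx {n m : nat} (A0 : 'M[R]_n) (A : 'I_m -> 'M[R]_n)
  (tau : 'I_m -> R) (s : Cx) : 'M[Cx]_n :=
  s%:M - toCmx A0 - \sum_(i < m) cexp (- ((tau i)%:C * s)) *: toCmx (A i).

Definition tds_stable {n m : nat} (A0 : 'M[R]_n) (A : 'I_m -> 'M[R]_n)
  (tau : 'I_m -> R) : Prop :=
  forall s : Cx, \det (char_mx A0 A tau s) = 0 -> complex.Re s < 0.

Definition tfun {n m nu ny : nat} (A0 : 'M[R]_n) (A : 'I_m -> 'M[R]_n)
  (B : 'M[R]_(n, nu)) (Cm : 'M[R]_(ny, n)) (D : 'M[R]_(ny, nu))
  (tau : 'I_m -> R) (s : Cx) : 'M[Cx]_(ny, nu) :=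
  toCmx Cm *m invmx (char_mx A0 A tau s) *m toCmx B + toCmx D.

Definition Dxi {nu ny : nat} (D : 'M[R]_(ny, nu)) (xi : R) : 'M[R]_nu :=
  D^T *m D - (xi ^+ 2)%:M.
Definition Dtxi {nu ny : nat} (D : 'M[R]_(ny, nu)) (xi : R) : 'M[R]_ny :=
  D *m D^T - (xi ^+ 2)%:M.

Definition Mzero {n nu ny : nat} (A0 : 'M[R]_n) (B : 'M[R]_(n, nu))
  (Cm : 'M[R]_(ny, n)) (D : 'M[R]_(ny, nu)) (xi : R) : 'M[R]_(n + n) :=
  block_mx (A0 - B *m invmx (Dxi D xi) *m D^T *m Cm)
           (- (B *m invmx (Dxi D xi) *m B^T))
           ((xi ^+ 2) *: (Cm^T *m invmx (Dtxi D xi) *m Cm))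
           (- A0^T + Cm^T *m D *m invmx (Dxi D xi) *m B^T).

Definition Mplus {n : nat} (Ai : 'M[R]_n) : 'M[R]_(n + n) :=
  block_mx Ai 0 0 0.
Definition Mminus {n : nat} (Ai : 'M[R]_n) : 'M[R]_(n + n) :=
  block_mx 0 0 0 (- Ai^T).

Definition Hxi {n m nu ny : nat} (A0 : 'M[R]_n) (A : 'I_m -> 'M[R]_n)
  (B : 'M[R]_(n, nu)) (Cm : 'M[R]_(ny, n)) (D : 'M[R]_(ny, nu))
  (tau : 'I_m -> R) (xi : R) (lam : Cx) : 'M[Cx]_(n + n) :=
  lam%:M - toCmx (Mzero A0 B Cm D xi)
  - \sum_(i < m) (cexp (- (lam * (tau i)%:C)) *: toCmx (Mplus (A i))
                  + cexp (lam * (tau i)%:C) *: toCmx (Mminus (A i))).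

End TDSDefs.

(* At s = jw the characteristic matrix K(s) is invertible by stability, and
   G(jw)^H is the transfer function of the transposed system at -jw, whose
   characteristic matrix is K(jw)^H.  If G^H G u = xi^2 u, the states
   x = K^-1 B u and y = K^-H C^T G u determine u again through the loop equation
   B^T y + D^T G u = xi^2 u, namely u = -D_xi^-1 (D^T C x + B^T y); substituting
   this back into K x = B u and K^H y = C^T G u says exactly that (x, y) is in
   the kernel of H_xi(jw).  Conversely a kernel vector (x, y) defines u by the
   same formula, and u is an eigenvector of G^H G.  The bottom-left block of
   M_0 matches thanks to xi^2 (D D^T - xi^2)^-1 = D D_xi^-1 D^T - I. *)

From HB Require Import structures.
From mathcomp Require Import all_boot all_order all_algebra.
From mathcomp Require Import complex.
From mathcomp Require Import reals sequences exp trigo.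
Import Order.TTheory GRing.Theory Num.Theory.
Set Implicit Arguments. Unset Strict Implicit. Unset Printing Implicit Defensive.
Local Open Scope ring_scope.

Lemma sum_block_mx (V : nmodType) m1 m2 n1 n2 (I : Type) (r : seq I)
    (Aul : I -> 'M[V]_(m1, n1)) (Aur : I -> 'M[V]_(m1, n2))
    (Adl : I -> 'M[V]_(m2, n1)) (Adr : I -> 'M[V]_(m2, n2)) :
  \sum_(i <- r) block_mx (Aul i) (Aur i) (Adl i) (Adr i) =
  block_mx (\sum_(i <- r) Aul i) (\sum_(i <- r) Aur i)
           (\sum_(i <- r) Adl i) (\sum_(i <- r) Adr i).
Proof.
elim: r => [|i r IHr]; first by rewrite !big_nil block_mx0.
by rewrite !big_cons IHr add_block_mx.
Qed.

Lemma det0_colP (F : fieldType) k (M : 'M[F]_k) :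
  reflect (exists2 z : 'cV_k, z != 0 & M *m z = 0) (\det M == 0).
Proof.
rewrite -det_tr; apply: (iffP det0P) => [[v v0 hv] | [z z0 hz]].
  by exists v^T; rewrite ?trmx_eq0 // -[M]trmxK -trmx_mul hv trmx0.
by exists z^T; rewrite ?trmx_eq0 // -trmx_mul hz trmx0.
Qed.

Lemma eigenvalue_colP (F : fieldType) k (g : 'M[F]_k) a :
  reflect (exists2 u : 'cV_k, u != 0 & g *m u = a *: u) (eigenvalue g a).
Proof.
rewrite /eigenvalue /eigenspace kermx_eq0 row_free_unit unitmxE unitfE negbK.
apply: (iffP (det0_colP _)) => -[u u0 hu]; exists u => //.
  by apply/eqP; rewrite -subr_eq0 -mul_scalar_mx -mulmxBl hu.
by rewrite mulmxBl mul_scalar_mx hu subrr.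
Qed.

Lemma scale_invmx_push_through (F : fieldType) p q (d1 : 'M[F]_(q, p))
    (d2 : 'M[F]_(p, q)) (s : F) :
  s != 0 -> d2 *m d1 - s%:M \in unitmx ->
  s *: invmx (d1 *m d2 - s%:M) = d1 *m invmx (d2 *m d1 - s%:M) *m d2 - 1%:M.
Proof.
move=> s0 unitD; set X := _ - 1%:M.
have push : (d1 *m d2 - s%:M) *m d1 = d1 *m (d2 *m d1 - s%:M).
  by rewrite mulmxBl mulmxBr mul_scalar_mx mul_mx_scalar mulmxA.
have inv : (d1 *m d2 - s%:M) *m (s^-1 *: X) = 1%:M.
  rewrite -scalemxAr /X mulmxBr mulmx1 !mulmxA push -(mulmxA d1) mulmxV //.
  by rewrite mulmx1 opprB addrC subrK scale_scalar_mx mulVf.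
have [unitD' _] := mulmx1_unit inv.
rewrite -[X](scalerKV s0); congr (_ *: _).
by rewrite -[RHS]mul1mx -(mulVmx unitD') -mulmxA inv mulmx1.
Qed.

Section HamiltonianKernel.
Variables (F : fieldType) (n p q : nat) (s : F).
Variables (K1 K2 : 'M[F]_n) (b1 : 'M[F]_(n, p)) (c1 : 'M[F]_(q, n))
  (d1 : 'M[F]_(q, p)) (b2 : 'M[F]_(p, n)) (c2 : 'M[F]_(n, q)) (d2 : 'M[F]_(p, q)).

Local Notation Di := (invmx (d2 *m d1 - s%:M)).

Definition hamiltonian_mx : 'M[F]_(n + n) :=
  block_mx (K1 + b1 *m Di *m d2 *m c1) (b1 *m Di *m b2)
           (- (c2 *m (d1 *m Di *m d2 - 1%:M) *m c1)) (- K2 - c2 *m d1 *m Di *m b2).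

Local Notation input x y := (- (Di *m (d2 *m (c1 *m x) + b2 *m y))).

Lemma hamiltonian_mx_col (x y : 'cV[F]_n) :
  hamiltonian_mx *m col_mx x y =
  col_mx (K1 *m x - b1 *m input x y) (c2 *m (c1 *m x + d1 *m input x y) - K2 *m y).
Proof.
rewrite mul_block_col; congr col_mx.
  by rewrite mulmxN opprK mulmxDl -!mulmxA -addrA -!mulmxDr.
rewrite mulmxDl !mulNmx mulmxBr mulmx1 !mulmxBl !mulmxN !mulmxDr -!mulmxA.
by rewrite opprB opprD mulmxBr mulmxN !addrA addrAC.
Qed.

Hypothesis unitD : d2 *m d1 - s%:M \in unitmx.

Lemma inputP (x y : 'cV[F]_n) (u : 'cV[F]_p) :
  input x y = u <-> d2 *m (c1 *m x + d1 *m u) + b2 *m y = s *: u.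
Proof.
have E v : (d2 *m (c1 *m x + d1 *m v) + b2 *m y == s *: v) =
           (d2 *m (c1 *m x) + b2 *m y == - ((d2 *m d1 - s%:M) *m v)).
  rewrite mulmxBl mul_scalar_mx opprB mulmxDr !mulmxA addrAC.
  by rewrite -subr_eq opprK.
split=> [<- | /eqP]; first by apply/eqP; rewrite E mulmxN opprK mulKVmx.
by rewrite E => /eqP ->; rewrite mulmxN opprK mulKmx.
Qed.

Hypotheses (unitK1 : K1 \in unitmx) (unitK2 : K2 \in unitmx).

Local Notation G1 := (c1 *m invmx K1 *m b1 + d1).
Local Notation G2 := (b2 *m invmx K2 *m c2 + d2).

Lemma hamiltonian_kernel_of_eigenvector (u : 'cV[F]_p) :
  u != 0 -> G2 *m G1 *m u = s *: u ->
  exists2 z : 'cV[F]_(n + n), z != 0 & hamiltonian_mx *m z = 0.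
Proof.
move=> u0 eig_u; set v := G1 *m u.
set x := invmx K1 *m (b1 *m u); set y := invmx K2 *m (c2 *m v).
have out_v : c1 *m x + d1 *m u = v by rewrite /v mulmxDl !mulmxA.
have input_u : input x y = u.
  by apply/inputP; rewrite out_v addrC -eig_u -mulmxA mulmxDl !mulmxA.
exists (col_mx x y).
  rewrite col_mx_eq0; apply: contra u0 => /andP[/eqP x0 /eqP y0].
  by rewrite -input_u x0 y0 !mulmx0 addr0 mulmx0 oppr0.
by rewrite hamiltonian_mx_col input_u out_v !mulKVmx // !subrr col_mx0.
Qed.

Lemma eigenvector_of_hamiltonian_kernel (z : 'cV[F]_(n + n)) :
  z != 0 -> hamiltonian_mx *m z = 0 ->
  exists2 u : 'cV[F]_p, u != 0 & G2 *m G1 *m u = s *: u.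
Proof.
rewrite -[z]vsubmxK; set x := usubmx z; set y := dsubmx z => z0.
rewrite hamiltonian_mx_col -col_mx0 => /eq_col_mx[/eqP eq_x /eqP eq_y].
set u := input x y in eq_x eq_y; set v := c1 *m x + d1 *m u in eq_y.
have {eq_x}x_def : x = invmx K1 *m (b1 *m u).
  by move: eq_x; rewrite subr_eq0 => /eqP <-; rewrite mulKmx.
have {eq_y}y_def : y = invmx K2 *m (c2 *m v).
  by move: eq_y; rewrite subr_eq0 => /eqP ->; rewrite mulKmx.
have G1u : G1 *m u = v by rewrite /v x_def mulmxDl !mulmxA.
exists u; last first.
  rewrite -mulmxA G1u mulmxDl -!mulmxA -y_def addrC.
  by apply/inputP.
apply: contra z0 => /eqP u0.
have x0 : x = 0 by rewrite x_def u0 !mulmx0.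
have y0 : y = 0 by rewrite y_def /v x0 u0 !mulmx0 addr0 !mulmx0.
by rewrite x0 y0 col_mx0.
Qed.

Lemma eigenvalue_mul_tfun_hamiltonian :
  eigenvalue (G2 *m G1) s = (\det hamiltonian_mx == 0).
Proof.
apply/eigenvalue_colP/det0_colP => -[w w0 hw].
  exact: (hamiltonian_kernel_of_eigenvector w0 hw).
exact: (eigenvector_of_hamiltonian_kernel w0 hw).
Qed.
End HamiltonianKernel.

Local Open Scope complex_scope.

Section DelaySystem.
Variable R : realType.
Local Notation Cx := R[i].

Lemma conjc_cexp (z : Cx) : conjc (cexp z) = cexp (conjc z).
Proof. by case: z => a b; rewrite /cexp rmorphM /= oppr0 cosN sinN. Qed.

Lemma conjc_realM (t : R) (z : Cx) : conjc (t%:C * z) = t%:C * conjc z.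
Proof. by rewrite -[in RHS](conjc_real t) -rmorphM. Qed.

Lemma conjc_imaginary (w : R) : conjc ('i * w%:C) = - ('i * w%:C).
Proof.
by apply/eqP; rewrite eq_complex /= !(mul0r, mulr0, mul1r, subr0, add0r, oppr0) !eqxx.
Qed.

Lemma Re_imaginary (w : R) : complex.Re ('i * w%:C) = 0.
Proof. by rewrite /= mul0r mulr0 subr0. Qed.

Lemma conjT_toCmx p q (X : 'M[R]_(p, q)) : conjT (toCmx X) = toCmx X^T.
Proof. by apply/matrixP => i j; rewrite !mxE conjc_real. Qed.

Lemma conjT_mulmx p q r (X : 'M[Cx]_(p, q)) (Y : 'M[Cx]_(q, r)) :
  conjT (X *m Y) = conjT Y *m conjT X.
Proof. by rewrite /conjT map_mxM trmx_mul. Qed.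

Lemma conjT_invmx p (X : 'M[Cx]_p) : conjT (invmx X) = invmx (conjT X).
Proof. by rewrite /conjT map_invmx trmx_inv. Qed.

Lemma unitmx_conjT p (X : 'M[Cx]_p) : (conjT X \in unitmx) = (X \in unitmx).
Proof. by rewrite !unitmxE /conjT det_tr det_map_mx !unitfE conjc_eq0. Qed.

Variables (n m : nat) (A0 : 'M[R]_n) (A : 'I_m -> 'M[R]_n) (tau : 'I_m -> R).

Lemma conjT_char_mx s :
  conjT (char_mx A0 A tau s) = char_mx A0^T (fun i => (A i)^T) tau (conjc s).
Proof.
apply/matrixP => i j; rewrite !mxE !summxE !rmorphB rmorphMn rmorph_sum eq_sym.
congr (_ - _ - _); first exact: conjc_real.
apply: eq_bigr => k _; rewrite !mxE rmorphM; congr (_ * _); last exact: conjc_real.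
by apply: etrans (conjc_cexp _) _; rewrite -conjc_realM -rmorphN.
Qed.

Lemma conjT_tfun nu ny (B : 'M[R]_(n, nu)) (Cm : 'M[R]_(ny, n)) (D : 'M[R]_(ny, nu)) s :
  conjT (tfun A0 A B Cm D tau s) =
  tfun A0^T (fun i => (A i)^T) Cm^T B^T D^T tau (conjc s).
Proof.
rewrite /tfun /conjT map_mxD linearD /= -!/(conjT _) !conjT_mulmx conjT_invmx.
by rewrite conjT_char_mx !conjT_toCmx mulmxA.
Qed.

Lemma toCmx_Dxi nu ny (D : 'M[R]_(ny, nu)) xi :
  toCmx (Dxi D xi) = toCmx D^T *m toCmx D - ((xi ^+ 2)%:C)%:M.
Proof. by rewrite /toCmx map_mxB map_mxM map_scalar_mx. Qed.

Lemma Hxi_delay_sum lam :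
  \sum_(i < m) (cexp (- (lam * (tau i)%:C)) *: toCmx (Mplus (A i))
                + cexp (lam * (tau i)%:C) *: toCmx (Mminus (A i))) =
  block_mx (\sum_(i < m) cexp (- ((tau i)%:C * lam)) *: toCmx (A i)) 0 0
           (- \sum_(i < m) cexp (- ((tau i)%:C * - lam)) *: toCmx (A i)^T).
Proof.
rewrite (eq_bigr (fun i => block_mx (cexp (- ((tau i)%:C * lam)) *: toCmx (A i)) 0 0
                   (- (cexp (- ((tau i)%:C * - lam)) *: toCmx (A i)^T)))).
  by rewrite sum_block_mx !big1_eq sumrN.
move=> i _; rewrite /Mplus /Mminus /toCmx !map_block_mx !map_mx0 map_mxN.
by rewrite !scale_block_mx !scaler0 add_block_mx !addr0 !add0r scalerN mulrN opprK
  !(mulrC lam).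
Qed.

Lemma Hxi_hamiltonian nu ny (B : 'M[R]_(n, nu)) (Cm : 'M[R]_(ny, n))
    (D : 'M[R]_(ny, nu)) xi lam :
  xi != 0 -> Dxi D xi \in unitmx ->
  Hxi A0 A B Cm D tau xi lam =
  hamiltonian_mx (xi ^+ 2)%:C (char_mx A0 A tau lam)
    (char_mx A0^T (fun i => (A i)^T) tau (- lam))
    (toCmx B) (toCmx Cm) (toCmx D) (toCmx B^T) (toCmx Cm^T) (toCmx D^T).
Proof.
move=> xi0 unitDxi.
have Dtxi_inv := @scale_invmx_push_through _ _ _ D D^T _ (expf_neq0 2 xi0) unitDxi.
rewrite /Hxi /hamiltonian_mx /Mzero scalemxAl scalemxAr Dtxi_inv -toCmx_Dxi -map_invmx.
rewrite Hxi_delay_sum (scalar_mx_block n n lam) /char_mx /toCmx !map_block_mx.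
rewrite !(map_mxB, map_mxN, map_mxD, map_mxM, map_mx1) !opp_block_mx !add_block_mx.
congr block_mx.
- by rewrite opprB addrA (addrAC lam%:M) [LHS]addrAC.
- by rewrite subr0 sub0r opprK.
- by rewrite subr0 sub0r.
- by rewrite !opprD !opprK raddfN opprK addrA [RHS]addrAC.
Qed.

End DelaySystem.

Theorem theorem4 (R : realType) (n m nu ny : nat)
  (A0 : 'M[R]_n) (A : 'I_m -> 'M[R]_n) (B : 'M[R]_(n, nu))
  (Cm : 'M[R]_(ny, n)) (D : 'M[R]_(ny, nu)) (tau : 'I_m -> R) (xi : R) :
  (0 < n)%N -> (0 < m)%N -> (0 < nu)%N -> (0 < ny)%N ->
  (forall i, 0 <= tau i) ->
  tds_stable A0 A tau ->
  0 < xi ->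
  Dxi D xi \in unitmx ->
  forall w : R, 0 <= w ->
    (is_singular_value (tfun A0 A B Cm D tau ('i * w%:C)) xi <->
     \det (Hxi A0 A B Cm D tau xi ('i * w%:C)) = 0).
Proof.
move=> _ _ _ _ _ stable xi_gt0 unitDxi w _; set lam := 'i * w%:C.
have unitK1 : char_mx A0 A tau lam \in unitmx.
  by rewrite unitmxE unitfE; apply/eqP => /stable; rewrite Re_imaginary ltxx.
have unitK2 : char_mx A0^T (fun i => (A i)^T) tau (- lam) \in unitmx.
  by rewrite -conjc_imaginary -conjT_char_mx unitmx_conjT.
have unitD : toCmx D^T *m toCmx D - ((xi ^+ 2)%:C)%:M \in unitmx.
  by rewrite -toCmx_Dxi map_unitmx.
rewrite /is_singular_value conjT_tfun conjc_imaginary Hxi_hamiltonian ?gt_eqF //.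
rewrite eigenvalue_mul_tfun_hamiltonian //.
by split=> [[_ /eqP] | /eqP] //; split=> //; exact: ltW.
Qed.
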